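(* Let $\Bbbk$ be a field, $H$ a Hopf $\Bbbk$-algebra with bijective antipode, $A$ a left $H$-module $\Bbbk$-algebra, and $P$ a prime ideal of $A$. Put $P\!:\!H = \{ a \in A \mid H.a \subseteq P\}$ (an $H$-prime ideal of $A$). Then there is an embedding of $\Bbbk$-fields $\mathcal{H}_H(P\!:\!H) \hookrightarrow \mathcal{H}(P)$. In particular, if $P$ is rational, then $P\!:\!H$ is $H$-rational.
   Context: A left $H$-module algebra is a $\Bbbk$-algebra $A$ with $1$ that is a left $H$-module via $h\otimes a\mapsto h.a$ such that $h.(ab)=(h_1.a)(h_2.b)$ and $h.1=\varepsilon(h)1$. An $H$-ideal is a two-sided ideal which is an $H$-submodule; then $A/I$ is again an $H$-module algebra. An $H$-ideal $I$ is $H$-prime if $A/I\neq 0$ and the product of any two nonzero $H$-ideals of $A/I$ is nonzero. For a ring $R$, $\operatorname{Q} R$ is its symmetric (Martindale) ring of quotients, $\mathcal{C} R$ the center of $\operatorname{Q} R$ (extended center), and $D_q=\{ r\in R \mid qRr\subseteq R,\ rRq\subseteq R\}$ for $q\in\operatorname{Q} R$. For an $H$-module algebra $B$, $\operatorname{Q}^H B = \{ q \in \operatorname{Q} B \mid h.(dq) = (h.d)q,\ h.(qd) = q(h.d)\ \forall h \in H, d \in D_q \}$ and $\mathcal{C}^H B = \mathcal{C} B\cap \operatorname{Q}^H B$. For $I$ an $H$-prime ideal of $A$, $\mathcal{H}_H(I)=\mathcal{C}^H(A/I)$ (a field), and $I$ is $H$-rational if $\mathcal{H}_H(I)$ is algebraic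 over $\Bbbk$. For a prime ideal $P$, the heart is $\mathcal{H}(P)=\mathcal{C}(A/P)$ (a field), and $P$ is rational if $\mathcal{H}(P)$ is algebraic over $\Bbbk$. *)

From HB Require Import structures.
From mathcomp Require Import all_boot all_order all_algebra.
Set Implicit Arguments. Unset Strict Implicit. Unset Printing Implicit Defensive.
Import Order.TTheory GRing.Theory.
Local Open Scope ring_scope.

(* An element of H (x) H is represented by a finite formal sum          *)
(* [:: (a1,b1); ...] meaning sum a_i (x) b_i.  Two representatives      *)
(* denote the same tensor iff they agree under every k-bilinear map     *)
(* into every k-vector space (universal property of the tensor product).*)
Section Tensor.
Variables (k : fieldType) (H : algType k).

Definition bilinear_map (V : lmodType k) (b : H -> H -> V) : Prop :=
  (forall c x x' y, b (c *: x + x') y = c *: b x y + b x' y) /\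
  (forall c x y y', b x (c *: y + y') = c *: b x y + b x y').

Definition trilinear_map (V : lmodType k) (b : H -> H -> H -> V) : Prop :=
  [/\ (forall c x x' y z, b (c *: x + x') y z = c *: b x y z + b x' y z),
      (forall c x y y' z, b x (c *: y + y') z = c *: b x y z + b x y' z)
    & (forall c x y z z', b x y (c *: z + z') = c *: b x y z + b x y z')].

Definition tensor2_eq (s t : seq (H * H)) : Prop :=
  forall (V : lmodType k) (b : H -> H -> V), bilinear_map b ->
    \sum_(p <- s) b p.1 p.2 = \sum_(p <- t) b p.1 p.2.

Definition tensor3_eq (s t : seq (H * H * H)) : Prop :=
  forall (V : lmodType k) (b : H -> H -> H -> V), trilinear_map b ->
    \sum_(p <- s) b p.1.1 p.1.2 p.2 = \sum_(p <- t) b p.1.1 p.1.2 p.2.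

Definition is_hopf_algebra (Delta : H -> seq (H * H)) (eps : H -> k)
    (S : H -> H) : Prop :=
  [/\
      (forall c x y, tensor2_eq (Delta (c *: x + y))
                      ([seq (c *: p.1, p.2) | p <- Delta x] ++ Delta y)),
      (forall x y, tensor2_eq (Delta (x * y))
                     [seq (p.1 * q.1, p.2 * q.2) | p <- Delta x, q <- Delta y])
      /\ tensor2_eq (Delta 1) [:: (1, 1)],
      (forall h, tensor3_eq
        [seq (q.1, q.2, p.2) | p <- Delta h, q <- Delta p.1]
        [seq (p.1, q.1, q.2) | p <- Delta h, q <- Delta p.2]),
      [/\ (forall c x y, eps (c *: x + y) = c * eps x + eps y),
          (forall x y, eps (x * y) = eps x * eps y), eps 1 = 1 &
          (forall h, \sum_(p <- Delta h) eps p.1 *: p.2 = h /\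
                     \sum_(p <- Delta h) eps p.2 *: p.1 = h)]
    &
      (forall c x y, S (c *: x + y) = c *: S x + S y) /\
      (forall h, \sum_(p <- Delta h) S p.1 * p.2 = (eps h)%:A /\
                 \sum_(p <- Delta h) p.1 * S p.2 = (eps h)%:A)].

Definition is_module_algebra (Delta : H -> seq (H * H)) (eps : H -> k)
    (A : algType k) (act : H -> A -> A) : Prop :=
  [/\ (forall c h g a, act (c *: h + g) a = c *: act h a + act g a),
      (forall c h a b, act h (c *: a + b) = c *: act h a + act h b),
      (forall h g a, act (h * g) a = act h (act g a)) /\ (forall a, act 1 a = a),
      (forall h a b, act h (a * b) = \sum_(p <- Delta h) act p.1 a * act p.2 b)
    & (forall h, act h 1 = (eps h)%:A)].

End Tensor.

Definition is_ideal (R : nzRingType) (I : R -> Prop) : Prop :=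
  [/\ I 0, (forall x y, I x -> I y -> I (x + y)), (forall x, I x -> I (- x))
    & (forall r x, I x -> I (r * x) /\ I (x * r))].

Definition prime_ideal (R : nzRingType) (P : R -> Prop) : Prop :=
  [/\ is_ideal P, ~ P 1 &
    forall I J, is_ideal I -> is_ideal J ->
      (forall x y, I x -> J y -> P (x * y)) ->
      (forall x, I x -> P x) \/ (forall x, J x -> P x)].

Definition colonH (k : fieldType) (H : algType k) (A : algType k)
    (act : H -> A -> A) (P : A -> Prop) : A -> Prop :=
  fun a => forall h, P (act h a).

Definition H_ideal (k : fieldType) (H : algType k) (B : nzRingType)
    (act : H -> B -> B) (J : B -> Prop) : Prop :=
  is_ideal J /\ forall h x, J x -> J (act h x).

Definition H_prime_algebra (k : fieldType) (H : algType k) (B : nzRingType)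
    (act : H -> B -> B) : Prop :=
  (1 : B) != 0 /\
  forall J K, H_ideal act J -> H_ideal act K ->
    (exists x, J x /\ x != 0) -> (exists y, K y /\ y != 0) ->
    exists x y, [/\ J x, K y & x * y != 0].

(* Symmetric (Martindale) ring of quotients, characterised by its       *)
(* defining properties, w.r.t. the filter of two-sided ideals with zero *)
(* left and right annihilators.                                          *)
Definition dense_ideal (R : nzRingType) (I : R -> Prop) : Prop :=
  [/\ is_ideal I,
      (forall r, (forall x, I x -> r * x = 0) -> r = 0)
    & (forall r, (forall x, I x -> x * r = 0) -> r = 0)].

Definition is_sym_quotient (R Q : nzRingType) (iota : {rmorphism R -> Q})
    : Prop :=
  [/\ injective iota,
      (forall q : Q, exists I, [/\ dense_ideal I,
          (forall x, I x -> exists r, iota x * q = iota r)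
        & (forall x, I x -> exists r, q * iota x = iota r)]),
      (forall (q : Q) I, dense_ideal I ->
          ((forall x, I x -> q * iota x = 0) -> q = 0) /\
          ((forall x, I x -> iota x * q = 0) -> q = 0))
    & forall I (f g : R -> R), dense_ideal I ->
          (forall x y, I x -> I y -> f (x + y) = f x + f y) ->
          (forall x y, I x -> I y -> g (x + y) = g x + g y) ->
          (forall x r, I x -> f (x * r) = f x * r) ->
          (forall x r, I x -> g (r * x) = r * g x) ->
          (forall x y, I x -> I y -> x * f y = g x * y) ->
          exists q : Q, forall x, I x ->
             q * iota x = iota (f x) /\ iota x * q = iota (g x)].

Section Quot.
Variables (R Q : nzRingType) (iota : {rmorphism R -> Q}).

Definition Dq (q : Q) (d : R) : Prop :=
  (forall s, exists t, q * iota s * iota d = iota t) /\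
  (forall s, exists t, iota d * iota s * q = iota t).

(* extended center C R = center of Q R *)
Definition in_center (q : Q) : Prop := forall x, q * x = x * q.

Variables (k : fieldType) (H : algType k) (act : H -> R -> R).

Definition in_QH (q : Q) : Prop :=
  forall h d, Dq q d ->
    (forall t, iota t = iota d * q -> iota (act h t) = iota (act h d) * q) /\
    (forall t, iota t = q * iota d -> iota (act h t) = q * iota (act h d)).

Definition in_CH (q : Q) : Prop := in_center q /\ in_QH q.
End Quot.

Definition algebraic_over (k : fieldType) (Q : nzRingType) (sigma : k -> Q)
    (q : Q) : Prop :=
  exists p : {poly k}, p != 0 /\ \sum_(i < size p) sigma p`_i * q ^+ i = 0.

(* Preimages in A of nonzero H-ideals of A/(P:H) are H-stable ideals not
   contained in P, so the H-primeness of P:H is inherited from P.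
   For q in C^H(A/(P:H)) the ideal of denominators {a | a q lies in A/(P:H)}
   is H-stable, so it is not contained in P: otherwise it would lie in P:H,
   contradicting the density of the denominators of q.  Its image in A/P is
   therefore dense, and multiplication by q descends to a well-defined
   bimodule map on it, i.e. to an element phi(q) of Q(A/P); phi is central,
   additive and multiplicative because all of this can be tested on products
   of denominators.  Injectivity, and more generally the transfer of a
   polynomial relation from phi(q) back to q, rests on one annihilator
   argument: if w a = 0 in Q(A/(P:H)) for every a in an H-stable ideal not
   contained in P, then w = 0.  This follows from the identity
   (h.u) e = sum h1.(u (S h2).e), which uses the antipode on one side only. *)

From HB Require Import structures.
From mathcomp Require Import all_boot all_order all_algebra.
From Stdlib Require Import Classical ClassicalEpsilon.
Import GRing.Theory.
Local Open Scope ring_scope.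
Set Implicit Arguments. Unset Strict Implicit.

Section IdealClosure.
Variables (R : nzRingType) (I : R -> Prop).
Hypothesis idI : is_ideal I.

Lemma ideal0 : I 0. Proof. by case: idI. Qed.

Lemma idealD x y : I x -> I y -> I (x + y). Proof. by case: idI => _ + _ _; apply. Qed.

Lemma idealN x : I x -> I (- x). Proof. by case: idI => _ _ + _; apply. Qed.

Lemma idealMl r x : I x -> I (r * x).
Proof. by case: idI => _ _ _ /[apply] /(_ r) []. Qed.

Lemma idealMr r x : I x -> I (x * r).
Proof. by case: idI => _ _ _ /[apply] /(_ r) []. Qed.

Lemma ideal_sum (J : Type) (s : seq J) (F : J -> R) :
  (forall j, I (F j)) -> I (\sum_(j <- s) F j).
Proof. by move=> IF; apply: (big_ind I ideal0 idealD) => j _; apply: IF. Qed.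

End IdealClosure.

Section Ideals.
Variable R : nzRingType.

Definition not_within (D P : R -> Prop) : Prop := exists2 a, D a & ~ P a.

Lemma ideal_meet (D1 D2 : R -> Prop) :
  is_ideal D1 -> is_ideal D2 -> is_ideal (fun x => D1 x /\ D2 x).
Proof.
move=> id1 id2; split.
- by split; [apply: (ideal0 id1) | apply: (ideal0 id2)].
- by move=> x y [? ?] [? ?]; split; [apply: (idealD id1) | apply: (idealD id2)].
- by move=> x [? ?]; split; [apply: (idealN id1) | apply: (idealN id2)].
- move=> r x [D1x D2x]; split; split.
  + exact: (idealMl id1).
  + exact: (idealMl id2).
  + exact: (idealMr id1).
  + exact: (idealMr id2).
Qed.

Lemma ideal_preim (S : nzRingType) (f : {rmorphism R -> S}) (J : S -> Prop) :
  is_ideal J -> is_ideal (fun a => J (f a)).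
Proof.
move=> idJ; split.
- by rewrite rmorph0; apply: (ideal0 idJ).
- by move=> x y Jx Jy; rewrite rmorphD; apply: (idealD idJ).
- by move=> x Jx; rewrite rmorphN; apply: (idealN idJ).
- by move=> r x Jx; rewrite !rmorphM; split; [apply: (idealMl idJ) | apply: (idealMr idJ)].
Qed.

Section PrimeIdeal.
Variable P : R -> Prop.
Hypothesis primeP : prime_ideal P.

Lemma prime_ideal_ideal : is_ideal P. Proof. by case: primeP. Qed.

Lemma prime_ideal_neq1 : ~ P 1. Proof. by case: primeP. Qed.

Lemma prime_ideal_mul_notin (D1 D2 : R -> Prop) :
  is_ideal D1 -> is_ideal D2 -> not_within D1 P -> not_within D2 P ->
  exists a b, [/\ D1 a, D2 b & ~ P (a * b)].
Proof.
move=> id1 id2 [a D1a nPa] [b D2b nPb]; apply: NNPP => noab.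
case: primeP => _ _ /(_ D1 D2 id1 id2) [x y D1x D2y | D1P | D2P].
- by apply: NNPP => nPxy; apply: noab; exists x, y.
- exact/nPa/D1P.
- exact/nPb/D2P.
Qed.

Lemma prime_ideal_mulRl (D : R -> Prop) s : is_ideal D -> not_within D P ->
  (forall a u, D a -> P (s * u * a)) -> P s.
Proof.
move=> idD [a0 Da0 nPa0] sRD; have idP := prime_ideal_ideal.
pose L y := forall a u, D a -> P (y * u * a).
have idL : is_ideal L.
  split=> [a u _ | x y Lx Ly a u Da | x Lx a u Da | r x Lx].
  - by rewrite !mul0r; apply: (ideal0 idP).
  - by rewrite !mulrDl; apply: (idealD idP); [apply: Lx | apply: Ly].
  - by rewrite !mulNr; apply: (idealN idP); apply: Lx.
  split=> a u Da; last by rewrite -(mulrA x r u); apply: Lx.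
  by rewrite -!mulrA; apply: (idealMl idP); rewrite !mulrA; apply: Lx.
case: primeP => _ _ /(_ L D idL idD) [x y Lx Dy | /(_ s sRD) // | D_P].
- by have := Lx y 1 Dy; rewrite mulr1.
- by case: nPa0; apply: D_P.
Qed.

Lemma prime_ideal_mulRr (D : R -> Prop) s : is_ideal D -> not_within D P ->
  (forall a u, D a -> P (a * u * s)) -> P s.
Proof.
move=> idD [a0 Da0 nPa0] DRs; have idP := prime_ideal_ideal.
pose L y := forall a u, D a -> P (a * u * y).
have idL : is_ideal L.
  split=> [a u _ | x y Lx Ly a u Da | x Lx a u Da | r x Lx].
  - by rewrite !mulr0; apply: (ideal0 idP).
  - by rewrite !mulrDr; apply: (idealD idP); [apply: Lx | apply: Ly].
  - by rewrite !mulrN; apply: (idealN idP); apply: Lx.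
  split=> a u Da; first by rewrite !mulrA -(mulrA a u r); apply: Lx.
  by rewrite !mulrA; apply: (idealMr idP); apply: Lx.
case: primeP => _ _ /(_ D L idD idL) [x y Dx Ly | D_P | /(_ s DRs) //].
- by have := Ly x 1 Dx; rewrite mulr1.
- by case: nPa0; apply: D_P.
Qed.

End PrimeIdeal.
End Ideals.

Lemma center1 (R : nzRingType) : in_center (1 : R).
Proof. by move=> x; rewrite mul1r mulr1. Qed.

Lemma centerX (R : nzRingType) (q : R) n : in_center q -> in_center (q ^+ n).
Proof. by move=> qC x; apply/esym/commrX/esym/qC. Qed.

Section ModuleAlgebra.
Variables (k : fieldType) (H : algType k) (Delta : H -> seq (H * H)) (eps : H -> k).
Variables (A : algType k) (act : H -> A -> A).
Hypothesis actA : is_module_algebra Delta eps act.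

Lemma act0l a : act 0 a = 0.
Proof.
case: actA => linH _ _ _ _; apply: (@addrI _ (act 0 a)).
by rewrite addr0 -{1}(scale1r (act 0 a)) -linH scale1r addr0.
Qed.

Lemma actDl h g a : act (h + g) a = act h a + act g a.
Proof. by case: actA => linH _ _ _ _; rewrite -[h]scale1r linH !scale1r. Qed.

Lemma actZl c h a : act (c *: h) a = c *: act h a.
Proof. by case: actA => linH _ _ _ _; rewrite -[c *: h]addr0 linH act0l addr0. Qed.

Lemma act_suml (J : Type) (s : seq J) (F : J -> H) a :
  act (\sum_(j <- s) F j) a = \sum_(j <- s) act (F j) a.
Proof. exact: (big_morph (act^~ a) (fun h g => actDl h g a) (act0l a)). Qed.

Lemma act0r h : act h 0 = 0.
Proof.
case: actA => _ linA _ _ _; apply: (@addrI _ (act h 0)).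
by rewrite addr0 -{1}(scale1r (act h 0)) -linA scale1r addr0.
Qed.

Lemma actDr h a b : act h (a + b) = act h a + act h b.
Proof. by case: actA => _ linA _ _ _; rewrite -[a]scale1r linA !scale1r. Qed.

Lemma actZr c h a : act h (c *: a) = c *: act h a.
Proof. by case: actA => _ linA _ _ _; rewrite -[c *: a]addr0 linA act0r addr0. Qed.

Lemma actNr h a : act h (- a) = - act h a.
Proof. by rewrite -scaleN1r actZr scaleN1r. Qed.

Lemma actBr h a b : act h (a - b) = act h a - act h b.
Proof. by rewrite actDr actNr. Qed.

Lemma act_sumr h (J : Type) (s : seq J) (F : J -> A) :
  act h (\sum_(j <- s) F j) = \sum_(j <- s) act h (F j).
Proof. exact: (big_morph (act h) (actDr h) (act0r h)). Qed.

Lemma act_comp h g a : act (h * g) a = act h (act g a).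
Proof. by case: actA => _ _ []. Qed.

Lemma act1 a : act 1 a = a.
Proof. by case: actA => _ _ []. Qed.

Lemma act_mul h a b : act h (a * b) = \sum_(p <- Delta h) act p.1 a * act p.2 b.
Proof. by case: actA. Qed.

Lemma act_scalarl c a : act c%:A a = c *: a.
Proof. by rewrite actZl act1. Qed.

Lemma act_scalarMr c h a : act h (c%:A * a) = c%:A * act h a.
Proof. by rewrite !mulr_algl actZr. Qed.

Lemma colonH_sub (P : A -> Prop) a : colonH act P a -> P a.
Proof. by move/(_ 1); rewrite act1. Qed.

End ModuleAlgebra.

Section HopfModuleAlgebra.
Variables (k : fieldType) (H : algType k).
Variables (Delta : H -> seq (H * H)) (eps : H -> k) (S : H -> H).
Hypothesis hopfH : is_hopf_algebra Delta eps S.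
Variables (A : algType k) (act : H -> A -> A).
Hypothesis actA : is_module_algebra Delta eps act.

(* Coassociativity and the antipode axiom give
   [sum h1.(u (S h2).e) = sum (h1.u) (h2 S h3).e = sum (h1.u) eps(h2) e]. *)
Lemma act_mul_antipode h u e :
  act h u * e = \sum_(p <- Delta h) act p.1 (u * act (S p.2) e).
Proof.
case: hopfH => _ _ coassoc [_ _ _ counit] [linS antipode].
case: (actA) => linH _ _ _ _.
pose b (x y z : H) : A := act x u * act (y * S z) e.
have trib : trilinear_map b.
  split=> c x y z *; rewrite /b.
  - by rewrite linH mulrDl -scalerAl.
  - by rewrite mulrDl -scalerAl linH mulrDr -scalerAr.
  - by rewrite linS mulrDr -scalerAr linH mulrDr -scalerAr.
have := coassoc h A b trib; rewrite !big_allpairs_dep /= => coassoc_b.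
transitivity (\sum_(p <- Delta h) \sum_(q <- Delta p.1) b q.1 q.2 p.2); last first.
  apply: eq_bigr => p _; rewrite (act_mul actA); apply: eq_bigr => q _.
  by rewrite /b (act_comp actA).
rewrite coassoc_b; transitivity (\sum_(p <- Delta h) (eps p.2 *: act p.1 u) * e).
  rewrite -mulr_suml -{1}((counit h).2) (act_suml actA).
  by congr (_ * _); apply: eq_bigr => p _; rewrite (actZl actA).
apply: eq_bigr => p _; rewrite /b -mulr_sumr -(act_suml actA) (antipode p.2).2.
by rewrite (act_scalarl actA) -scalerAl scalerAr.
Qed.

Variable P : A -> Prop.
Hypothesis primeP : prime_ideal P.

Local Notation I := (colonH act P).

Lemma colonH_annihilator (D : A -> Prop) u :
  is_ideal D -> (forall h e, D e -> D (act h e)) -> not_within D P ->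
  (forall e, D e -> I (u * e)) -> I u.
Proof.
move=> idD stD nDP uD_I h; apply: (prime_ideal_mulRl primeP idD nDP) => e r De.
rewrite -mulrA act_mul_antipode; apply: (ideal_sum (prime_ideal_ideal primeP)) => p.
by apply: uD_I; apply: stD; apply: (idealMl idD).
Qed.

End HopfModuleAlgebra.

Section SymQuotient.
Variables (R Q : nzRingType) (iota : {rmorphism R -> Q}).
Hypothesis symQ : is_sym_quotient iota.

Lemma sym_quotient_inj : injective iota. Proof. by case: symQ. Qed.

Lemma sym_quotient_center r : (forall x, r * x = x * r) -> in_center (iota r).
Proof.
move=> rC y; case: symQ => _ /(_ y) [J [denseJ _ yJ]] annih _.
apply/subr0_eq; apply: (annih _ J denseJ).1 => x Jx; have [s ys] := yJ x Jx.
rewrite mulrBl; have -> : y * iota r * iota x = iota r * y * iota x.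
  by rewrite -!mulrA ys -!rmorphM rC rmorphM mulrA ys -rmorphM rC.
by rewrite subrr.
Qed.

End SymQuotient.

Section QuotientKernel.
Variables (R B Q : nzRingType) (pi : {rmorphism R -> B}) (iota : {rmorphism B -> Q}).
Variable K : R -> Prop.
Hypotheses (pi_ker : forall a, pi a = 0 <-> K a) (iota_inj : injective iota).

Lemma quotient_eq0 a : iota (pi a) = 0 <-> K a.
Proof.
rewrite -pi_ker -(rmorph0 iota).
by split=> [/iota_inj | ->].
Qed.

Lemma quotient_eq a b : iota (pi a) = iota (pi b) <-> K (a - b).
Proof.
rewrite -quotient_eq0 !rmorphB.
by split=> [-> | /subr0_eq]; first exact: subrr.
Qed.

End QuotientKernel.

Section PrimeQuotient.
Variables (R B Q : nzRingType) (P : R -> Prop).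
Variables (pi : {rmorphism R -> B}) (iota : {rmorphism B -> Q}).
Hypotheses (primeP : prime_ideal P) (pi_surj : forall b, exists a, pi a = b).
Hypotheses (pi_ker : forall a, pi a = 0 <-> P a) (symQ : is_sym_quotient iota).

Lemma dense_ideal_image (D : R -> Prop) : is_ideal D -> not_within D P ->
  dense_ideal (fun x => exists2 a, D a & pi a = x).
Proof.
move=> idD nDP; split.
- split=> [|_ _ [a Da <-] [b Db <-] | _ [a Da <-] | r _ [a Da <-]].
  + by exists 0; [apply: (ideal0 idD) | rewrite rmorph0].
  + by exists (a + b); [apply: (idealD idD) | rewrite rmorphD].
  + by exists (- a); [apply: (idealN idD) | rewrite rmorphN].
  have [r' <-] := pi_surj r.
  by split; [exists (r' * a); [apply: (idealMl idD) | rewrite rmorphM]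
            | exists (a * r'); [apply: (idealMr idD) | rewrite rmorphM]].
- move=> r; have [s <-] := pi_surj r => rD0; apply/pi_ker.
  apply: (prime_ideal_mulRl primeP idD nDP) => a u Da; apply/pi_ker.
  rewrite -mulrA rmorphM; apply: rD0.
  by exists (u * a); [apply: (idealMl idD) | rewrite rmorphM].
- move=> r; have [s <-] := pi_surj r => Dr0; apply/pi_ker.
  apply: (prime_ideal_mulRr primeP idD nDP) => a u Da; apply/pi_ker.
  rewrite rmorphM; apply: Dr0.
  by exists (a * u); [apply: (idealMr idD) | rewrite rmorphM].
Qed.

Lemma sym_quotient_annihilator (D : R -> Prop) z : is_ideal D -> not_within D P ->
  (forall a, D a -> z * iota (pi a) = 0) -> z = 0.
Proof.
move=> idD nDP zD; case: symQ => _ _ /(_ z _ (dense_ideal_image idD nDP)) [annih _] _.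
by apply: annih => _ [a Da <-]; apply: zD.
Qed.

End PrimeQuotient.

Section ReductionModP.
Variables (k : fieldType) (H : algType k).
Variables (Delta : H -> seq (H * H)) (eps : H -> k) (S : H -> H).
Hypothesis hopfH : is_hopf_algebra Delta eps S.
Variables (A : algType k) (act : H -> A -> A) (P : A -> Prop).
Hypotheses (actA : is_module_algebra Delta eps act) (primeP : prime_ideal P).
Variables (B1 : nzRingType) (pi1 : {rmorphism A -> B1}).
Hypotheses (pi1_surj : forall b, exists a, pi1 a = b) (pi1_ker : forall a, pi1 a = 0 <-> P a).
Variables (Q1 : nzRingType) (iota1 : {rmorphism B1 -> Q1}).
Hypothesis symQ1 : is_sym_quotient iota1.
Variables (B2 : nzRingType) (pi2 : {rmorphism A -> B2}).
Hypothesis pi2_surj : forall b, exists a, pi2 a = b.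
Hypothesis pi2_ker : forall a, pi2 a = 0 <-> colonH act P a.
Variable act2 : H -> B2 -> B2.
Hypothesis act2E : forall h a, act2 h (pi2 a) = pi2 (act h a).
Variables (Q2 : nzRingType) (iota2 : {rmorphism B2 -> Q2}).
Hypothesis symQ2 : is_sym_quotient iota2.

Local Notation I := (colonH act P).
Local Notation j1 a := (iota1 (pi1 a)).
Local Notation j2 a := (iota2 (pi2 a)).

Let P_ideal := prime_ideal_ideal primeP.
Let j1_eq0 := quotient_eq0 pi1_ker (sym_quotient_inj symQ1).
Let j1_eq := quotient_eq pi1_ker (sym_quotient_inj symQ1).
Let j2_eq0 := quotient_eq0 pi2_ker (sym_quotient_inj symQ2).
Let j2_eq := quotient_eq pi2_ker (sym_quotient_inj symQ2).
Let annih1 := sym_quotient_annihilator primeP pi1_surj pi1_ker symQ1.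

Lemma pi1_j2 a b : j2 a = j2 b -> pi1 a = pi1 b.
Proof. by move/j2_eq/(colonH_sub actA)/pi1_ker; rewrite rmorphB => /subr0_eq. Qed.

Lemma H_ideal_preim_not_within (J : B2 -> Prop) z :
  (forall h x, J x -> J (act2 h x)) -> J z -> z != 0 ->
  not_within (fun a => J (pi2 a)) P.
Proof.
move=> stJ; have [a <-] := pi2_surj z => Ja /negP a_neq0; apply: NNPP => noJ.
apply/a_neq0/eqP/pi2_ker => h; apply: NNPP => nPh; apply: noJ.
by exists (act h a) => //; rewrite -act2E; apply: stJ.
Qed.

Lemma H_prime_quotient : H_prime_algebra act2.
Proof.
split=> [|J K [idJ stJ] [idK stK] [x [Jx x0]] [y [Ky y0]]]; first exact: oner_neq0.
have [a [b [Ja Kb nPab]]] := prime_ideal_mul_notin primeP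
  (ideal_preim pi2 idJ) (ideal_preim pi2 idK)
  (H_ideal_preim_not_within stJ Jx x0) (H_ideal_preim_not_within stK Ky y0).
exists (pi2 a), (pi2 b); split=> //; rewrite -rmorphM.
by apply/eqP => /pi2_ker /(colonH_sub actA).
Qed.

Definition denom (q : Q2) (a : A) : Prop := exists t, j2 a * q = j2 t.

Lemma denom_mull q r a t : j2 a * q = j2 t -> j2 (r * a) * q = j2 (r * t).
Proof. by move=> aq; rewrite !rmorphM -mulrA aq. Qed.

Lemma denom_mulr q r a t : in_center q -> j2 a * q = j2 t -> j2 (a * r) * q = j2 (t * r).
Proof. by move=> qC aq; rewrite !rmorphM -mulrA -qC mulrA aq. Qed.

Lemma denomD q q' a b t t' : in_center q -> j2 a * q = j2 t -> j2 b * q' = j2 t' ->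
  j2 (a * b) * (q + q') = j2 (t * b + a * t').
Proof.
by move=> qC aq bq'; rewrite mulrDr (denom_mulr _ qC aq) (denom_mull _ bq') !rmorphD.
Qed.

Lemma denomM q q' a b t t' : in_center q -> j2 a * q = j2 t -> j2 b * q' = j2 t' ->
  j2 (a * b) * (q * q') = j2 (t * t').
Proof. by move=> qC aq bq'; rewrite mulrA (denom_mulr _ qC aq) (denom_mull _ bq'). Qed.

Lemma denom_ideal q : in_center q -> is_ideal (denom q).
Proof.
move=> qC; split=> [|a b [t aq] [u bq] | a [t aq] | r a [t aq]].
- by exists 0; rewrite !rmorph0 mul0r.
- by exists (t + u); rewrite !rmorphD mulrDl aq bq.
- by exists (- t); rewrite !rmorphN mulNr aq.
- by split; [exists (r * t); apply: denom_mull | exists (t * r); apply: denom_mulr].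
Qed.

Lemma CH_denom_act q h a t : in_CH iota2 act2 q ->
  j2 a * q = j2 t -> j2 (act h a) * q = j2 (act h t).
Proof.
move=> [qC qH] aq; have Dq_a : Dq iota2 q (pi2 a).
  split=> s; first by exists (s * pi2 t); rewrite qC -mulrA qC aq rmorphM.
  by exists (pi2 t * s); rewrite -mulrA -qC mulrA aq rmorphM.
by rewrite -!act2E ((qH h _ Dq_a).1 _ (esym aq)).
Qed.

Definition reducible (q : Q2) : Prop := in_center q /\ not_within (denom q) P.

Lemma CH_reducible q : in_CH iota2 act2 q -> reducible q.
Proof.
move=> qCH; split; first exact: qCH.1.
apply: NNPP => noD; have denom_I a : denom q a -> I a.
  move=> [t aq] h; apply: NNPP => nPh; apply: noD; exists (act h a) => //.
  by exists (act h t); apply: CH_denom_act.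
suff: (1 : B2) = 0 by move/eqP; rewrite oner_eq0.
case: symQ2 => _ /(_ q) [J [[_ _ annihJ] Jq _]] _ _.
apply: annihJ => x Jx; have [r xq] := Jq x Jx.
have [a ax] := pi2_surj x; have [t tr] := pi2_surj r.
by rewrite mulr1 -ax; apply/pi2_ker/denom_I; exists t; rewrite ax tr.
Qed.

Definition reduces_to (q : Q2) (z : Q1) : Prop :=
  forall a t, j2 a * q = j2 t -> z * j1 a = j1 t.

Section Reduction.
Variable q : Q2.
Hypothesis red_q : reducible q.

Lemma numer_P d u : P d -> j2 d * q = j2 u -> P u.
Proof.
case: red_q => qC nDP Pd du.
apply: (prime_ideal_mulRl primeP (denom_ideal qC) nDP) => x r [v xv].
have /j2_eq/(colonH_sub actA) Pdiff : j2 (u * r * x) = j2 (d * r * v).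
  by rewrite !rmorphM -du -!mulrA qC -!mulrA xv.
have := idealD P_ideal Pdiff (idealMr P_ideal v (idealMr P_ideal r Pd)).
by rewrite subrK.
Qed.

Lemma reduction_map : exists F : B1 -> B1,
  forall a t, j2 a * q = j2 t -> F (pi1 a) = pi1 t.
Proof.
pose Rq b y := exists a t, [/\ pi1 a = b, j2 a * q = j2 t & pi1 t = y].
pose F b := epsilon (inhabits 0) (Rq b).
exists F => a t aq.
have [a' [t' [a'a a'q <-]]] : Rq (pi1 a) (F (pi1 a)).
  by apply: epsilon_spec; exists (pi1 t), a, t.
apply/subr0_eq; rewrite -rmorphB; apply/pi1_ker/(@numer_P (a' - a)).
  by apply/pi1_ker; rewrite rmorphB a'a subrr.
by rewrite !rmorphB mulrBl a'q aq.
Qed.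

Lemma reduces_to_exists : exists z, reduces_to q z.
Proof.
have [qC nDP] := red_q; have [F Fq] := reduction_map.
pose D x := exists2 a, denom q a & pi1 a = x.
have FD x y : D x -> D y -> F (x + y) = F x + F y.
  move=> [a [t aq] <-] [b [u bq] <-].
  rewrite -rmorphD (Fq _ _ aq) (Fq _ _ bq) -rmorphD; apply: Fq.
  by rewrite !rmorphD mulrDl aq bq.
have FMr x r : D x -> F (x * r) = F x * r.
  move=> [a [t aq] <-]; have [r' <-] := pi1_surj r.
  by rewrite -rmorphM (Fq _ _ aq) -rmorphM; apply/Fq/denom_mulr.
have FMl x r : D x -> F (r * x) = r * F x.
  move=> [a [t aq] <-]; have [r' <-] := pi1_surj r.
  by rewrite -rmorphM (Fq _ _ aq) -rmorphM; apply/Fq/denom_mull.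
have FM x y : D x -> D y -> x * F y = F x * y.
  move=> [a [t aq] <-] [b [u bq] <-]; rewrite (Fq _ _ aq) (Fq _ _ bq) -!rmorphM.
  by apply: pi1_j2; rewrite !rmorphM -bq -aq -!mulrA qC.
have denseD := dense_ideal_image primeP pi1_surj pi1_ker (denom_ideal qC) nDP.
case: symQ1 => _ _ _ /(_ D F F denseD FD FD FMr FMl FM) [z zF].
exists z => a t aq; have Da : D (pi1 a) by exists a => //; exists t.
by rewrite (zF _ Da).1 (Fq _ _ aq).
Qed.

Lemma reduces_to_unique z z' : reduces_to q z -> reduces_to q z' -> z = z'.
Proof.
case: red_q => qC nDP zq z'q; apply/subr0_eq.
apply: (annih1 (denom_ideal qC) nDP) => a [t aq].
by rewrite mulrBl (zq _ _ aq) (z'q _ _ aq) subrr.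
Qed.

End Reduction.

Definition phi (q : Q2) : Q1 := epsilon (inhabits 0) (reduces_to q).

Lemma phiP q : reducible q -> reduces_to q (phi q).
Proof. by move=> red_q; apply: epsilon_spec; apply: reduces_to_exists. Qed.

Lemma phi_center q : reducible q -> in_center (phi q).
Proof.
move=> red_q y; have [qC nDP] := red_q; have qz := phiP red_q.
case: symQ1 => _ /(_ y) [J [denseJ _ yJ]] annihJ _.
apply/subr0_eq; apply: (annihJ _ J denseJ).1 => x Jx; have [w' yx] := yJ x Jx.
have [u ux] := pi1_surj x; have [w ww'] := pi1_surj w'; rewrite -ux -ww' in yx *.
apply: (annih1 (denom_ideal qC) nDP) => a [t aq].
have phiy : phi q * y * j1 u * j1 a = j1 (w * t).
  by rewrite -(mulrA _ y) yx -mulrA -!rmorphM (qz _ _ (denom_mull _ aq)).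
have yphi : y * phi q * j1 u * j1 a = j1 (w * t).
  by rewrite -!mulrA -!rmorphM (qz _ _ (denom_mull _ aq)) !rmorphM mulrA yx.
by rewrite !mulrBl phiy yphi subrr.
Qed.

Lemma reducible_mul_notin q q' : reducible q -> reducible q' ->
  exists a b t t', [/\ j2 a * q = j2 t, j2 b * q' = j2 t' & ~ P (a * b)].
Proof.
move=> [qC nDP] [q'C nD'P].
have [a [b [[t aq] [t' bq'] nPab]]] :=
  prime_ideal_mul_notin primeP (denom_ideal qC) (denom_ideal q'C) nDP nD'P.
by exists a, b, t, t'.
Qed.

Lemma reducibleD q q' : reducible q -> reducible q' -> reducible (q + q').
Proof.
move=> rq rq'; have [a [b [t [t' [aq bq' nPab]]]]] := reducible_mul_notin rq rq'.
split; last by exists (a * b) => //; exists (t * b + a * t'); apply: denomD rq.1 aq bq'.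
by move=> x; rewrite mulrDl mulrDr rq.1 rq'.1.
Qed.

Lemma reducibleM q q' : reducible q -> reducible q' -> reducible (q * q').
Proof.
move=> rq rq'; have [a [b [t [t' [aq bq' nPab]]]]] := reducible_mul_notin rq rq'.
split; last by exists (a * b) => //; exists (t * t'); apply: denomM rq.1 aq bq'.
by move=> x; rewrite -mulrA rq'.1 mulrA rq.1 mulrA.
Qed.

Lemma reducible_scalar c : reducible (j2 c%:A).
Proof.
split; last by exists 1; [exists c%:A; rewrite !rmorph1 mul1r | exact: prime_ideal_neq1].
apply: (sym_quotient_center symQ2) => x; have [a <-] := pi2_surj x.
by rewrite -!rmorphM mulr_algl mulr_algr.
Qed.

Lemma reducible1 : reducible 1.
Proof. by have := reducible_scalar 1; rewrite scale1r !rmorph1. Qed.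

Lemma reducibleX q n : reducible q -> reducible (q ^+ n).
Proof.
move=> rq; elim: n => [|n IH]; first by rewrite expr0; apply: reducible1.
by rewrite exprS; apply: reducibleM.
Qed.

Lemma phiD q q' : reducible q -> reducible q' -> phi (q + q') = phi q + phi q'.
Proof.
move=> rq rq'; have [qC nDP] := rq; have [q'C nD'P] := rq'.
apply/subr0_eq; apply: (annih1 (denom_ideal qC) nDP) => a [t aq].
apply: (annih1 (denom_ideal q'C) nD'P) => b [t' bq'].
rewrite -mulrA -!rmorphM mulrBl mulrDl (phiP (reducibleD rq rq') (denomD qC aq bq')).
by rewrite (phiP rq (denom_mulr _ qC aq)) (phiP rq' (denom_mull _ bq')) !rmorphD subrr.
Qed.

Lemma phiM q q' : reducible q -> reducible q' -> phi (q * q') = phi q * phi q'.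
Proof.
move=> rq rq'; have [qC nDP] := rq; have [q'C nD'P] := rq'.
apply/subr0_eq; apply: (annih1 (denom_ideal qC) nDP) => a [t aq].
apply: (annih1 (denom_ideal q'C) nD'P) => b [t' bq'].
rewrite -mulrA -!rmorphM mulrBl (phiP (reducibleM rq rq') (denomM qC aq bq')).
by rewrite -mulrA (phiP rq' (denom_mull _ bq')) (phiP rq (denom_mulr _ qC aq)) subrr.
Qed.

Lemma phi_scalar c : phi (j2 c%:A) = j1 c%:A.
Proof.
apply: (reduces_to_unique (reducible_scalar c)); first exact/phiP/reducible_scalar.
move=> a t ta; rewrite -!rmorphM; congr (iota1 _); apply: pi1_j2.
by rewrite -ta -!rmorphM mulr_algl mulr_algr.
Qed.

Lemma phi1 : phi 1 = 1.
Proof. by have := phi_scalar 1; rewrite scale1r !rmorph1. Qed.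

Lemma phiX q n : reducible q -> phi (q ^+ n) = phi q ^+ n.
Proof.
move=> rq; elim: n => [|n IH]; first by rewrite !expr0 phi1.
by rewrite !exprS phiM ?IH //; apply: reducibleX.
Qed.

Lemma Hstable_annihilator_eq0 (D : A -> Prop) w :
  is_ideal D -> (forall h e, D e -> D (act h e)) -> not_within D P ->
  (forall e, D e -> w * j2 e = 0) -> w = 0.
Proof.
move=> idD stD nDP wD; case: symQ2 => _ /(_ w) [J [denseJ _ wJ]] annihJ _.
apply: (annihJ w J denseJ).1 => x Jx; have [r wx] := wJ x Jx.
have [a ax] := pi2_surj x; have [u ur] := pi2_surj r; rewrite wx -ur; apply/j2_eq0.
apply: (colonH_annihilator hopfH actA primeP idD stD nDP) => e De; apply/j2_eq0.
by rewrite !rmorphM ur -wx -ax -mulrA -!rmorphM; apply/wD/(idealMl idD).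
Qed.

Lemma phi_inj q q' : in_CH iota2 act2 q -> in_CH iota2 act2 q' ->
  phi q = phi q' -> q = q'.
Proof.
move=> qCH q'CH phi_qq'; have rq := CH_reducible qCH; have rq' := CH_reducible q'CH.
have [qC nDP] := rq; have [q'C nD'P] := rq'.
have idD := ideal_meet (denom_ideal qC) (denom_ideal q'C).
apply/subr0_eq; apply: (Hstable_annihilator_eq0 idD).
- move=> h e [[t eq] [t' eq']].
  by split; [exists (act h t) | exists (act h t')]; apply: CH_denom_act.
- have [a [b [Da Db nPab]]] :=
    prime_ideal_mul_notin primeP (denom_ideal qC) (denom_ideal q'C) nDP nD'P.
  exists (a * b) => //.
  by split; [apply: (idealMr (denom_ideal qC)) | apply: (idealMl (denom_ideal q'C))].
move=> e [[t eq] [t' eq']]; rewrite mulrBl qC q'C eq eq'.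
rewrite (proj2 (j2_eq t t')) ?subrr // => h; rewrite (actBr actA); apply/j1_eq.
by rewrite -(phiP rq (CH_denom_act h qCH eq)) phi_qq' (phiP rq' (CH_denom_act h q'CH eq')).
Qed.

(* [q ^+ i] need not lie in Q^H, so the H-compatibility of its denominators
   has to be carried along explicitly. *)
Definition hrep (w : Q2) (e s : A) : Prop :=
  forall h, j2 (act h e) * w = j2 (act h s).

Lemma hrep1 e : hrep 1 e e.
Proof. by move=> h; rewrite mulr1. Qed.

Lemma hrep0 w : hrep w 0 0.
Proof. by move=> h; rewrite !(act0r actA) !rmorph0 mul0r. Qed.

Lemma hrepD w e s e' s' : hrep w e s -> hrep w e' s' -> hrep w (e + e') (s + s').
Proof. by move=> es es' h; rewrite !(actDr actA) !rmorphD mulrDl es es'. Qed.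

Lemma hrepN w e s : hrep w e s -> hrep w (- e) (- s).
Proof. by move=> es h; rewrite !(actNr actA) !rmorphN mulNr es. Qed.

Lemma hrep_act w g e s : hrep w e s -> hrep w (act g e) (act g s).
Proof. by move=> es h; rewrite -!(act_comp actA). Qed.

Lemma hrepM w w' e s e' s' : in_center w -> hrep w e s -> hrep w' e' s' ->
  hrep (w * w') (e * e') (s * s').
Proof.
move=> wC es es' h; rewrite !(act_mul actA) !rmorph_sum mulr_suml.
apply: eq_bigr => p _.
by rewrite !rmorphM mulrA -(mulrA (j2 _)) -wC mulrA es -mulrA es'.
Qed.

Definition hdenom (q : Q2) (n : nat) (e : A) : Prop :=
  forall i, (i <= n)%N -> exists s, hrep (q ^+ i) e s.

Lemma hdenom_ideal q n : in_center q -> is_ideal (hdenom q n).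
Proof.
move=> qC; split=> [i _ | e e' he he' i ni | e he i ni | r e he].
- by exists 0; apply: hrep0.
- have [s es] := he i ni; have [s' es'] := he' i ni.
  by exists (s + s'); apply: hrepD.
- by have [s es] := he i ni; exists (- s); apply: hrepN.
split=> i ni; have [s es] := he i ni.
- exists (r * s); rewrite -[q ^+ i]mul1r.
  by apply: hrepM; [apply: center1 | apply: hrep1 | apply: es].
- exists (s * r); rewrite -[q ^+ i]mulr1.
  by apply: hrepM; [apply: centerX | apply: es | apply: hrep1].
Qed.

Lemma hdenom_not_within q n : in_CH iota2 act2 q -> not_within (hdenom q n) P.
Proof.
move=> qCH; have [qC nDP] := CH_reducible qCH.
elim: n => [|n [e he nPe]].
  exists 1; last exact: prime_ideal_neq1 primeP.
  by move=> i; rewrite leqn0 => /eqP ->; exists 1; rewrite expr0; apply: hrep1.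
have [a [b [[t aq] hb nPab]]] := prime_ideal_mul_notin primeP
  (denom_ideal qC) (hdenom_ideal n qC) nDP (ex_intro2 _ _ e he nPe).
exists (a * b) => // -[|i] lti; first by exists (a * b); rewrite expr0; apply: hrep1.
have [s bs] := hb i lti; exists (t * s); rewrite exprS.
by apply: hrepM => // h; apply: CH_denom_act.
Qed.

Lemma algebraic_reduction q (p : {poly k}) : in_CH iota2 act2 q ->
  \sum_(i < size p) j1 (p`_i)%:A * phi q ^+ i = 0 ->
  \sum_(i < size p) j2 (p`_i)%:A * q ^+ i = 0.
Proof.
move=> qCH pq0; have rq := CH_reducible qCH; have qC := rq.1.
apply: (Hstable_annihilator_eq0 (hdenom_ideal (size p) qC)).
- by move=> h e he i ni; have [s es] := he i ni; exists (act h s); apply: hrep_act.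
- exact: hdenom_not_within.
move=> e he; pose s i := epsilon (inhabits 0) (hrep (q ^+ i) e).
have es (i : 'I_(size p)) : hrep (q ^+ i) e (s i).
  exact: epsilon_spec (he i (ltnW (ltn_ord i))).
pose T := \sum_(i < size p) (p`_i)%:A * s i.
have -> : (\sum_(i < size p) j2 (p`_i)%:A * q ^+ i) * j2 e = j2 T.
  rewrite mulr_suml !rmorph_sum; apply: eq_bigr => i _.
  have := es i 1; rewrite !(act1 actA) => eq_i.
  by rewrite -mulrA (centerX i qC) eq_i -!rmorphM.
apply/j2_eq0 => h; apply/j1_eq0.
transitivity ((\sum_(i < size p) j1 (p`_i)%:A * phi q ^+ i) * j1 (act h e));
  last by rewrite pq0 mul0r.
rewrite (act_sumr actA) mulr_suml !rmorph_sum; apply: eq_bigr => i _.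
by rewrite (act_scalarMr actA) -mulrA -phiX // (phiP (reducibleX i rq) (es i h)) !rmorphM.
Qed.

End ReductionModP.

Unset Implicit Arguments. Set Strict Implicit.

Theorem proposition3p1
  (k : fieldType) (H : algType k)
  (Delta : H -> seq (H * H)) (eps : H -> k) (S : H -> H)
  (hH : is_hopf_algebra Delta eps S) (hS : bijective S)
  (A : algType k) (act : H -> A -> A) (hA : is_module_algebra Delta eps act)
  (P : A -> Prop) (hP : prime_ideal P)
  (* B1 = A/P, Q1 = Q(A/P) *)
  (B1 : nzRingType) (pi1 : {rmorphism A -> B1})
  (pi1_surj : forall b, exists a, pi1 a = b)
  (pi1_ker : forall a, pi1 a = 0 <-> P a)
  (Q1 : nzRingType) (iota1 : {rmorphism B1 -> Q1})
  (hQ1 : is_sym_quotient iota1)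
  (* B2 = A/(P:H) with the induced H-action, Q2 = Q(A/(P:H)) *)
  (B2 : nzRingType) (pi2 : {rmorphism A -> B2})
  (pi2_surj : forall b, exists a, pi2 a = b)
  (pi2_ker : forall a, pi2 a = 0 <-> colonH act P a)
  (act2 : H -> B2 -> B2) (hact2 : forall h a, act2 h (pi2 a) = pi2 (act h a))
  (Q2 : nzRingType) (iota2 : {rmorphism B2 -> Q2})
  (hQ2 : is_sym_quotient iota2) :
  (* P:H is H-prime *)
  H_prime_algebra act2 /\
  (* embedding of k-fields H_H(P:H) = C^H(A/(P:H)) into H(P) = C(A/P) *)
  (exists phi : Q2 -> Q1,
     [/\ forall q, in_CH iota2 act2 q -> in_center (phi q),
         forall q q', in_CH iota2 act2 q -> in_CH iota2 act2 q' ->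
           phi (q + q') = phi q + phi q' /\ phi (q * q') = phi q * phi q',
         phi 1 = 1,
         forall c : k, phi (iota2 (pi2 c%:A)) = iota1 (pi1 c%:A)
       & forall q q', in_CH iota2 act2 q -> in_CH iota2 act2 q' ->
           phi q = phi q' -> q = q']) /\
  (* P rational  ==>  P:H is H-rational *)
  ((forall q, in_center q ->
      algebraic_over (fun c : k => iota1 (pi1 c%:A)) q) ->
   forall q, in_CH iota2 act2 q ->
      algebraic_over (fun c : k => iota2 (pi2 c%:A)) q).
Proof.
have red q : in_CH iota2 act2 q -> reducible P pi2 iota2 q :=
  CH_reducible pi2_surj pi2_ker hact2 hQ2 (q:=q).
have phi_C := phi_center hA hP pi1_surj pi1_ker hQ1 pi2_ker hQ2.
split; first exact: (H_prime_quotient hA hP pi2_surj pi2_ker hact2).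
split.
  exists (phi pi1 iota1 pi2 iota2); split.
  - by move=> q /red; apply: phi_C.
  - move=> q q' /red rq /red rq'; split.
      exact: (phiD hA hP pi1_surj pi1_ker hQ1 pi2_ker hQ2 rq rq').
    exact: (phiM hA hP pi1_surj pi1_ker hQ1 pi2_ker hQ2 rq rq').
  - exact: (phi1 hA hP pi1_surj pi1_ker hQ1 pi2_surj pi2_ker hQ2).
  - exact: (phi_scalar hA hP pi1_surj pi1_ker hQ1 pi2_surj pi2_ker hQ2).
  - exact: (phi_inj hH hA hP pi1_surj pi1_ker hQ1 pi2_surj pi2_ker hact2 hQ2).
move=> ratP q qCH; have [p [p_neq0 p_phi]] := ratP _ (phi_C _ (red q qCH)).
exists p; split=> //.
exact: (algebraic_reduction hH hA hP pi1_surj pi1_ker hQ1 pi2_surj pi2_ker hact2 hQ2 qCH p_phi).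
Qed.
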